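(* Let $h,m$ be positive integers. Every $\mathrm{CC}^h[m]$-circuit $\Gamma$ computing a non-constant Boolean function has balance at least $2^{1-\gamma_{h,m}^{-1}(|\Gamma|)}$.
   Context: For an integer $m\ge 1$ and $A\subseteq\{0,\dots,m-1\}$, a gate $\mathrm{MOD}_m^A$ takes finitely many Boolean inputs (counted with multiplicity) and outputs $1$ if their sum modulo $m$ lies in $A$, and $0$ otherwise. A $\mathrm{CC}^h[m]$-circuit is a depth-$h$ Boolean circuit all of whose gates are of the form $\mathrm{MOD}_m^A$ ($A$ may vary between gates), with Boolean variable inputs (constants allowed) and multiple wires allowed. $|\Gamma|$ is the number of gates of $\Gamma$. $\gamma_{h,m}(n)$ is the size of the smallest $\mathrm{CC}^h[m]$-circuit computing the $n$-ary conjunction $\mathrm{AND}_n$ (partial function), and $\gamma_{h,m}^{-1}(k)$ is the largest $n$ with $\gamma_{h,m}(n)\le k$. The balance of an $n$-ary Boolean function $f$ is $1-\frac{\big||f^{-1}(0)|-|f^{-1}(1)|\big|}{2^n}$. *)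

From mathcomp Require Import all_boot all_algebra.
Set Implicit Arguments. Unset Strict Implicit. Unset Printing Implicit Defensive.
Import GRing.Theory Num.Theory.

(* A wire feeding a gate: a Boolean variable x_i, a constant, or the output
   of an earlier gate (gates are indexed by their position in the list). *)
Inductive wire := WVar of nat | WConst of bool | WGate of nat.

(* A MOD_m^A gate with A a subset of {0,...,m-1}; inputs form a list, so
   multiple wires from the same source are allowed. *)
Record gate (m : nat) := Gate { gate_acc : {set 'I_m}; gate_in : seq wire }.

(* A circuit of MOD_m gates on [arity] variables; the gates are listed in
   topological order and the output gate is the last one. *)
Record circuit (m : nat) := Circuit { arity : nat; gates : seq (gate m) }.

Definition csize m (C : circuit m) : nat := size (gates C).

Definition wire_ok (n j : nat) (w : wire) : bool :=
  match w with WVar i => i < n | WConst _ => true | WGate k => k < j end.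

Fixpoint gates_ok m (n j : nat) (gs : seq (gate m)) : bool :=
  match gs with
  | [::] => true
  | g :: gs' => all (wire_ok n j) (gate_in g) && gates_ok n j.+1 gs'
  end.

Definition circ_wf m (C : circuit m) : bool :=
  (0 < size (gates C)) && gates_ok (arity C) 0 (gates C).

Definition gate_out m (g : gate m) (ins : seq bool) : bool :=
  [exists a in gate_acc g, nat_of_ord a == sumn (map nat_of_bool ins) %% m].

Definition wire_val (x : nat -> bool) (vals : seq bool) (w : wire) : bool :=
  match w with WVar i => x i | WConst b => b | WGate k => nth false vals k end.

Fixpoint eval_gates m (x : nat -> bool) (vals : seq bool) (gs : seq (gate m))
  : seq bool :=
  match gs with
  | [::] => vals
  | g :: gs' =>
      eval_gates x (rcons vals (gate_out g (map (wire_val x vals) (gate_in g)))) gs'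
  end.

Definition circ_fun m (C : circuit m) (t : (arity C).-tuple bool) : bool :=
  last false (eval_gates (fun i => nth false t i) [::] (gates C)).
Arguments circ_fun {m} C t.

Definition wire_depth (ds : seq nat) (w : wire) : nat :=
  match w with WGate k => nth 0 ds k | _ => 0 end.

Fixpoint gate_depths m (ds : seq nat) (gs : seq (gate m)) : seq nat :=
  match gs with
  | [::] => ds
  | g :: gs' =>
      gate_depths (rcons ds (\max_(w <- gate_in g) wire_depth ds w).+1) gs'
  end.

Definition circ_depth m (C : circuit m) : nat :=
  \max_(d <- gate_depths [::] (gates C)) d.

Definition is_CC (h m : nat) (C : circuit m) : Prop :=
  circ_wf C /\ circ_depth C = h.
Arguments is_CC h m C : clear implicits.

Definition computes_AND m (n : nat) (C : circuit m) : Prop :=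
  arity C = n /\ forall t : (arity C).-tuple bool, circ_fun C t = all id t.
Arguments computes_AND {m} n C.

(* gamma_{h,m}(n) = s : s is the size of a smallest CC^h[m]-circuit
   computing AND_n (undefined if there is none: gamma is partial) *)
Definition gamma_is (h m n s : nat) : Prop :=
  (exists C : circuit m, is_CC h m C /\ computes_AND n C /\ csize C = s) /\
  (forall C : circuit m, is_CC h m C -> computes_AND n C -> s <= csize C).

Definition gamma_inv_is (h m k N : nat) : Prop :=
  (exists s, gamma_is h m N s /\ s <= k) /\
  (forall n s, gamma_is h m n s -> s <= k -> n <= N).

Definition balance (n : nat) (f : n.-tuple bool -> bool) : rat :=
  1 - `| (#|[pred t : n.-tuple bool | ~~ f t]|%:R
          - #|[pred t : n.-tuple bool | f t]|%:R : rat) | / (2 ^+ n).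

Definition nonconstant (n : nat) (f : n.-tuple bool -> bool) : Prop :=
  exists t1 t2, f t1 <> f t2.

From mathcomp Require Import all_boot all_algebra.
From mathcomp Require Import zify ring.
From Stdlib Require Import Wf_nat Classical.
Import GRing.Theory Num.Theory.
Set Implicit Arguments. Unset Strict Implicit. Unset Printing Implicit Defensive.

(* Let f be the function computed by the circuit, on n variables, with M > 0
   accepted inputs. Going through the variables one at a time, we maintain
   2^n <= M 2^d while substituting constants and literals y_j or ~ y_j for the
   variables, until f becomes AND_d: if one half of the cube contains no
   accepted input, the variable becomes a new (possibly negated) AND variable;
   otherwise it is fixed to the half with fewer, but at least one, accepted
   inputs, so that M is at least twice the count left on that half.
   MOD_m gates absorb constants and negated inputs, since ~ y = 1 + (m-1) y
   modulo m, so the substituted circuit is again a CC^h[m]-circuit of the same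
   size, whence d <= N. Applied to the circuit and to the circuit with its
   output gate complemented, this bounds both |f^-1(1)| and |f^-1(0)| below by
   2^(n-N); the balance is 2 min(|f^-1(0)|, |f^-1(1)|) / 2^n. *)

Lemma card_thead_eq n b (P : pred (n.-tuple bool)) :
  #|[pred t : n.+1.-tuple bool | (thead t == b) && P [tuple of behead t]]| = #|P|.
Proof.
have cons_inj : injective (fun t : n.-tuple bool => [tuple of b :: t]).
  by move=> x y /(congr1 val) [] /val_inj.
rewrite -(card_image cons_inj P); apply: eq_card => t; rewrite inE.
apply/andP/imageP => [[/eqP <- Pt]|[x Px ->]].
  by exists [tuple of behead t] => //; apply: val_inj; rewrite [in LHS](tuple_eta t).
split => //.
by have -> : [tuple of behead [tuple of b :: x]] = x by apply: val_inj.
Qed.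

Lemma card_split_thead n (f : n.+1.-tuple bool -> bool) b :
  #|[pred t | f t]| = #|[pred t : n.-tuple bool | f [tuple of b :: t]]|
                    + #|[pred t : n.-tuple bool | f [tuple of ~~ b :: t]]|.
Proof.
rewrite -(cardID [pred t : n.+1.-tuple bool | thead t == b]).
rewrite -(card_thead_eq b [pred t : n.-tuple bool | f [tuple of b :: t]]).
rewrite -(card_thead_eq (~~ b) [pred t : n.-tuple bool | f [tuple of ~~ b :: t]]).
congr (_ + _); apply: eq_card; case/tupleP => x t; rewrite !inE theadE;
  (have -> : [tuple of behead [tuple of x :: t]] = t by apply: val_inj);
  by case: b x => -[]; rewrite ?andbT ?andbF.
Qed.

Inductive lit := LConst of bool | LVar of nat & bool.

Definition eval_lit (t : seq bool) (l : lit) : bool :=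
  match l with LConst b => b | LVar j b => nth false t j (+) b end.

Definition lit_ok (d : nat) (l : lit) : bool :=
  match l with LConst _ => true | LVar j _ => j < d end.

Definition shift_lit (l : lit) : lit :=
  match l with LConst b => LConst b | LVar j b => LVar j.+1 b end.

Definition eval_lits d n (t : d.-tuple bool) (s : n.-tuple lit) : n.-tuple bool :=
  [tuple of map (eval_lit t) s].

Definition restricts_to_AND n (f : n.-tuple bool -> bool) d (s : n.-tuple lit) :=
  all (lit_ok d) s /\ forall t : d.-tuple bool, f (eval_lits t s) = all id t.

Lemma restricts_to_AND_const n (f : n.+1.-tuple bool -> bool) b d
    (s : n.-tuple lit) :
  restricts_to_AND (fun t => f [tuple of b :: t]) d s ->
  restricts_to_AND f d [tuple of LConst b :: s].
Proof. by move=> [s_ok fs]; split=> // t; rewrite -fs; congr f; apply: val_inj. Qed.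

Lemma restricts_to_AND_var n (f : n.+1.-tuple bool -> bool) b d
    (s : n.-tuple lit) :
  (forall t : n.-tuple bool, ~~ f [tuple of ~~ b :: t]) ->
  restricts_to_AND (fun t => f [tuple of b :: t]) d s ->
  restricts_to_AND f d.+1 [tuple of LVar 0 (~~ b) :: map_tuple shift_lit s].
Proof.
move=> f_nb [s_ok fs]; split.
  by rewrite /= all_map; apply: sub_all s_ok => -[].
case/tupleP => y t.
have -> : eval_lits [tuple of y :: t] [tuple of LVar 0 (~~ b) :: map_tuple shift_lit s]
          = [tuple of y (+) ~~ b :: eval_lits t s].
  by apply: val_inj; rewrite /= -map_comp; congr (_ :: _); apply: eq_map => -[].
case: y; rewrite /= ?addTb ?addFb ?negbK; first exact: fs.
by apply/negbTE/f_nb.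
Qed.

Lemma exists_restriction_to_AND n (f : n.-tuple bool -> bool) :
  0 < #|[pred t | f t]| ->
  exists d (s : n.-tuple lit),
    restricts_to_AND f d s /\ 2 ^ n <= #|[pred t | f t]| * 2 ^ d.
Proof.
elim: n f => [|n IH] f.
  move=> /card_gt0P [t0]; rewrite inE (tuple0 t0) => f0.
  exists 0, [tuple]; split.
    by split=> // t; rewrite tuple0 [t]tuple0.
  by rewrite expn0 muln1; apply/card_gt0P; exists [tuple].
move=> f_gt0; pose ones b := #|[pred t : n.-tuple bool | f [tuple of b :: t]]|.
have [b [ones_b_gt0 ones_b_min]] :
    exists b, 0 < ones b /\ (ones (~~ b) = 0 \/ ones b <= ones (~~ b)).
  move: f_gt0; rewrite (card_split_thead f false) -/(ones false) -/(ones true).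
  case: (posnP (ones false)) => [ones_f0|ones_f_gt0] ones_gt0.
    by exists true; rewrite ones_f0 in ones_gt0; split; [|left].
  case: (posnP (ones true)) => [ones_t0|ones_t_gt0].
    by exists false; split; [|left].
  case: (leqP (ones false) (ones true)) => [le_ft|/ltnW le_tf].
    by exists false; split; [|right].
  by exists true; split; [|right].
have [d [s [fs card_d]]] := IH _ ones_b_gt0; rewrite -/(ones b) in card_d.
rewrite (card_split_thead f b) -/(ones b) -/(ones (~~ b)) expnS.
case: ones_b_min => [ones_nb0|ones_b_le].
  exists d.+1, [tuple of LVar 0 (~~ b) :: map_tuple shift_lit s]; split.
    apply: restricts_to_AND_var fs => t.
    by have := card0_eq ones_nb0 t; rewrite inE => ->.
  by rewrite ones_nb0 addn0 expnS mulnCA leq_pmul2l.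
exists d, [tuple of LConst b :: s]; split; first exact: restricts_to_AND_const.
clearbody ones; nia.
Qed.

Section Substitution.
Variable m : nat.
Hypothesis m_gt0 : 0 < m.

(* The negated literal ~ y_j is fed as 1 + (m-1) y_j: MOD_m gates only see
   the sum of their inputs modulo m. *)
Definition subst_wire (s : seq lit) (w : wire) : seq wire :=
  match w with
  | WVar i => match nth (LConst false) s i with
              | LConst b => [:: WConst b]
              | LVar j false => [:: WVar j]
              | LVar j true => WConst true :: nseq m.-1 (WVar j)
              end
  | _ => [:: w]
  end.

Definition subst_gate (s : seq lit) (g : gate m) : gate m :=
  Gate (gate_acc g) (flatten (map (subst_wire s) (gate_in g))).

Definition subst_circuit (C : circuit m) d (s : seq lit) : circuit m :=
  Circuit d (map (subst_gate s) (gates C)).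

Lemma csize_subst (C : circuit m) d s : csize (subst_circuit C d s) = csize C.
Proof. exact: size_map. Qed.

Lemma gate_out_eqmod (g : gate m) (bs1 bs2 : seq bool) :
  sumn (map nat_of_bool bs1) = sumn (map nat_of_bool bs2) %[mod m] ->
  gate_out g bs1 = gate_out g bs2.
Proof. by rewrite /gate_out => ->. Qed.

Section Evaluation.
Variables (s : seq lit) (t : seq bool) (x : nat -> bool).
Hypothesis x_lits : forall i, x i = eval_lit t (nth (LConst false) s i).

Lemma sumn_subst_wire vals w :
  sumn (map nat_of_bool (map (wire_val (nth false t) vals) (subst_wire s w)))
  = wire_val x vals w %[mod m].
Proof.
case: w => [i|b|k] /=; rewrite ?addn0 // x_lits.
case: (nth (LConst false) s i) => [b|j []] /=; rewrite ?addn0 ?addbF //.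
rewrite !map_nseq sumn_nseq.
rewrite /=; case: (nth false t j); rewrite ?mul0n ?mul1n //.
by rewrite add1n prednK // modnn mod0n.
Qed.

Lemma sumn_subst_wires vals ws :
  sumn (map nat_of_bool (map (wire_val (nth false t) vals)
                              (flatten (map (subst_wire s) ws))))
  = sumn (map nat_of_bool (map (wire_val x vals) ws)) %[mod m].
Proof.
elim: ws => //= w ws IH.
by rewrite !map_cat sumn_cat -modnDm sumn_subst_wire IH modnDm.
Qed.

Lemma eval_gates_subst gs vals :
  eval_gates (nth false t) vals (map (subst_gate s) gs) = eval_gates x vals gs.
Proof.
elim: gs vals => //= g gs IH vals; rewrite IH.
by congr (eval_gates _ (rcons _ _) _); apply/gate_out_eqmod/sumn_subst_wires.
Qed.

End Evaluation.

Lemma circ_fun_subst (C : circuit m) d (s : (arity C).-tuple lit) (t : d.-tuple bool) :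
  circ_fun (subst_circuit C d s) t = circ_fun C (eval_lits t s).
Proof.
rewrite /circ_fun /=; congr (last false _); apply: eval_gates_subst => i /=.
have [i_lt|i_ge] := ltnP i (size s); first by rewrite (nth_map (LConst false)).
by rewrite !nth_default // size_map.
Qed.

Lemma max_depth_subst ds s ws :
  \max_(w <- flatten (map (subst_wire s) ws)) wire_depth ds w
  = \max_(w <- ws) wire_depth ds w.
Proof.
elim: ws => [|w ws IH] /=; first by rewrite !big_nil.
rewrite big_cat big_cons IH; congr maxn.
case: w => [i|b|k] /=; rewrite ?big_cons ?big_nil ?maxn0 //.
case: nth => [b|j []]; rewrite /= ?big_cons ?big_nil ?maxn0 //.
by rewrite big_nseq; elim: m.-1 => //= k ->.
Qed.

Lemma gate_depths_subst ds s gs :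
  gate_depths ds (map (subst_gate s) gs) = gate_depths ds gs.
Proof. by elim: gs ds => //= g gs IH ds; rewrite max_depth_subst IH. Qed.

Lemma gates_ok_subst n d (s : seq lit) j gs :
  size s = n -> all (lit_ok d) s ->
  gates_ok n j gs -> gates_ok d j (map (subst_gate s) gs).
Proof.
move=> size_s s_ok; elim: gs j => //= g gs IH j /andP [g_ok gs_ok].
rewrite IH // andbT; elim: (gate_in g) g_ok => //= w ws IHw /andP [w_ok ws_ok].
rewrite all_cat IHw // andbT.
case: w w_ok => [i|b|k] //= i_lt; rewrite ?andbT //.
have := all_nthP (LConst false) s_ok i; rewrite size_s => /(_ i_lt).
by case: nth => [b|j' []] //= j'_lt; rewrite ?j'_lt // all_nseq /= j'_lt orbT.
Qed.

Lemma is_CC_subst h (C : circuit m) d (s : (arity C).-tuple lit) :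
  is_CC h m C -> all (lit_ok d) s -> is_CC h m (subst_circuit C d s).
Proof.
move=> [/andP [gates_gt0 C_ok] depth_C] s_ok; split.
  by rewrite /circ_wf size_map gates_gt0 (gates_ok_subst (size_tuple s)).
by rewrite /circ_depth gate_depths_subst.
Qed.

End Substitution.

Section Complement.
Variable m : nat.
Hypothesis m_gt0 : 0 < m.

Definition compl_gate (g : gate m) : gate m := Gate (~: gate_acc g) (gate_in g).

Fixpoint compl_last (gs : seq (gate m)) : seq (gate m) :=
  match gs with
  | [::] => [::]
  | [:: g] => [:: compl_gate g]
  | g :: gs' => g :: compl_last gs'
  end.

Definition compl_circuit (C : circuit m) : circuit m :=
  Circuit (arity C) (compl_last (gates C)).

Lemma gate_out_compl g bs : gate_out (compl_gate g) bs = ~~ gate_out g bs.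
Proof.
rewrite /gate_out /=; set v := _ %% m.
have v_lt : v < m by rewrite ltn_pmod.
have exists_eq (A : {set 'I_m}) :
    [exists a in A, nat_of_ord a == v] = (Ordinal v_lt \in A).
  apply/existsP/idP => [[a /andP [aA /eqP av]]|vA].
    by rewrite (_ : Ordinal v_lt = a) //; apply: val_inj.
  by exists (Ordinal v_lt); rewrite vA eqxx.
by rewrite !exists_eq in_setC.
Qed.

Lemma eval_gates_compl_last x vals gs : 0 < size gs ->
  last false (eval_gates x vals (compl_last gs))
  = ~~ last false (eval_gates x vals gs).
Proof.
elim: gs vals => //= g [|g' gs] IH vals _; last exact: IH.
by rewrite /= !last_rcons gate_out_compl.
Qed.

Lemma size_compl_last gs : size (compl_last gs) = size gs.
Proof. by elim: gs => //= g [|g' gs] //= ->. Qed.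

Lemma gates_ok_compl_last n j gs : gates_ok n j (compl_last gs) = gates_ok n j gs.
Proof. by elim: gs j => //= g [|g' gs] IH j //; rewrite -IH. Qed.

Lemma gate_depths_compl_last ds gs : gate_depths ds (compl_last gs) = gate_depths ds gs.
Proof. by elim: gs ds => //= g [|g' gs] IH ds //; rewrite -IH. Qed.

Lemma circ_fun_compl (C : circuit m) t :
  circ_wf C -> circ_fun (compl_circuit C) t = ~~ circ_fun C t.
Proof. by case/andP=> gates_gt0 _; apply: eval_gates_compl_last. Qed.

Lemma csize_compl (C : circuit m) : csize (compl_circuit C) = csize C.
Proof. exact: size_compl_last. Qed.

Lemma is_CC_compl h (C : circuit m) : is_CC h m C -> is_CC h m (compl_circuit C).
Proof.
move=> [C_wf depth_C]; split; last by rewrite /circ_depth gate_depths_compl_last.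
by rewrite /circ_wf size_compl_last gates_ok_compl_last.
Qed.

End Complement.

Lemma gamma_inv_ge h m (C : circuit m) d k N :
  is_CC h m C -> computes_AND d C -> csize C <= k -> gamma_inv_is h m k N ->
  d <= N.
Proof.
move=> C_CC C_AND C_le [_ N_max].
(* gamma_{h,m}(d) is attained by a smallest circuit; classically, the sizes
   of AND_d circuits form a decidable nonempty set of naturals. *)
pose AND_size s := exists C' : circuit m,
  is_CC h m C' /\ computes_AND d C' /\ csize C' = s.
have [s [[[C0 C0_spec] s_min] _]] :=
  dec_inh_nat_subset_has_unique_least_element AND_size (fun s => classic _)
    (ex_intro _ (csize C) (ex_intro _ C (conj C_CC (conj C_AND erefl)))).
apply: (N_max d s).
  by split=> [|C1 C1_CC C1_AND]; [exists C0 | apply/leP/s_min; exists C1].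
by apply: leq_trans C_le; apply/leP/s_min; exists C.
Qed.

Lemma card_accept_lower_bound h m (C : circuit m) N :
  0 < m -> is_CC h m C -> gamma_inv_is h m (csize C) N ->
  0 < #|[pred t | circ_fun C t]| ->
  2 ^ arity C <= #|[pred t | circ_fun C t]| * 2 ^ N.
Proof.
move=> m_gt0 C_CC C_gamma accept_gt0.
have [d [s [[s_ok C_s] card_d]]] := exists_restriction_to_AND accept_gt0.
apply: leq_trans card_d _; rewrite leq_mul2l; apply/orP; right; apply: leq_pexp2l => //.
apply: (gamma_inv_ge (C := subst_circuit C d s)) C_gamma.
- exact: is_CC_subst.
- by split=> // t; rewrite circ_fun_subst.
- by rewrite csize_subst.
Qed.

Lemma nonconstant_card_gt0 n (f : n.-tuple bool -> bool) :
  nonconstant f -> 0 < #|[pred t | f t]| /\ 0 < #|[pred t | ~~ f t]|.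
Proof.
move=> [t1 [t2 f_t12]].
have card_gt0 u v : f u -> ~~ f v ->
    0 < #|[pred t | f t]| /\ 0 < #|[pred t | ~~ f t]|.
  by move=> fu fv; split; apply/card_gt0P; [exists u | exists v].
case f1: (f t1); case f2: (f t2); rewrite f1 f2 in f_t12 => //.
  by apply: (card_gt0 t1 t2); rewrite ?f1 ?f2.
by apply: (card_gt0 t2 t1); rewrite ?f1 ?f2.
Qed.

Local Open Scope ring_scope.

Lemma balance_arith (a b n N : nat) :
  (a + b = 2 ^ n)%N -> (2 ^ n <= a * 2 ^ N)%N -> (2 ^ n <= b * 2 ^ N)%N ->
  (2 : rat) / 2 ^+ N <= 1 - `|a%:R - b%:R| / 2 ^+ n.
Proof.
wlog a_le_b : a b / (a <= b)%N => [sym ab a_bd b_bd|ab a_bd _].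
  have [a_le_b|/ltnW b_le_a] := leqP a b; first exact: sym.
  by rewrite distrC; apply: sym; rewrite // addnC.
have pow_n : (2 : rat) ^+ n = a%:R + b%:R by rewrite -natrD ab natrX.
have pow_n_gt0 : (0 : rat) < 2 ^+ n by rewrite exprn_gt0.
rewrite ler0_norm ?subr_le0 ?ler_nat // opprB.
have -> : 1 - (b%:R - a%:R) / 2 ^+ n = 2 * a%:R / (2 ^+ n : rat).
  by rewrite pow_n in pow_n_gt0 *; field; rewrite lt0r_neq0.
rewrite ler_pdivrMr ?exprn_gt0 // mulrAC ler_pdivlMr // -mulrA ler_pM2l //.
by rewrite -!natrX -natrM ler_nat.
Qed.

Lemma balance_ge n (f : n.-tuple bool -> bool) N :
  (2 ^ n <= #|[pred t | ~~ f t]| * 2 ^ N)%N ->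
  (2 ^ n <= #|[pred t | f t]| * 2 ^ N)%N ->
  (2 : rat) / 2 ^+ N <= balance f.
Proof.
apply: balance_arith; have := cardC [pred t : n.-tuple bool | f t].
rewrite card_tuple card_bool addnC => <-.
by congr (_ + _)%N; apply: eq_card => t; rewrite !inE.
Qed.

Theorem corollary6p2 (h m : nat) (hpos : (0 < h)%N) (mpos : (0 < m)%N)
  (G : circuit m) (N : nat) :
  is_CC h m G ->
  nonconstant (circ_fun G) ->
  gamma_inv_is h m (csize G) N ->
  (2 : rat) / (2 ^+ N) <= balance (circ_fun G).
Proof.
move=> G_CC /nonconstant_card_gt0 [accept_gt0 reject_gt0] G_gamma.
apply: balance_ge; last exact: card_accept_lower_bound mpos G_CC G_gamma accept_gt0.
have reject_eq : #|[pred t | ~~ circ_fun G t]|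
                 = #|[pred t | circ_fun (compl_circuit G) t]|.
  by apply: eq_card => t; rewrite !inE circ_fun_compl //; case: G_CC.
rewrite reject_eq in reject_gt0 *.
have := card_accept_lower_bound mpos (is_CC_compl G_CC).
by rewrite csize_compl => /(_ _ G_gamma reject_gt0).
Qed.
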